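(* For every integer $s\ge1$, $$\sum_{n=1}^{s}\frac{E_{2n}}{2^{2n}}\,t(2s,2n)=t(2s+1,1)=\frac{(2s)!}{2^{2s}}\binom{-1/2}{s}=(-1)^s\Big(\frac{1\cdot3\cdots(2s-1)}{2^s}\Big)^2 .$$ Equivalently, $\operatorname{sech}(D/2)\,0^{[2s]}=D\,0^{[2s+1]}$.
   Context: $E_{2n}$ are the Euler numbers: $\operatorname{sech}x=\sum_{n\ge0}E_{2n}x^{2n}/(2n)!$. Central factorials: $x^{[0]}=1$, $x^{[n]}=x\prod_{j=1}^{n-1}(x+\tfrac n2-j)$ for $n\ge1$; $t(n,k)$ is defined by $x^{[n]}=\sum_k t(n,k)x^k$. For a power series $h(D)=\sum_k h_kD^k$, $h(D)\,0^{[n]}:=\sum_k h_k\,k!\,t(n,k)$. *)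

From HB Require Import structures.
From mathcomp Require Import all_boot all_order all_algebra.
Set Implicit Arguments. Unset Strict Implicit. Unset Printing Implicit Defensive.
Import Order.TTheory GRing.Theory Num.Theory.
Local Open Scope ring_scope.

(* Euler numbers E_{2n}, sech x = sum_n E_{2n} x^{2n}/(2n)!.  Since
   cosh x * sech x = 1, comparing coefficients of x^{2n} gives
   E_0 = 1 and sum_{k=0}^{n} C(2n,2k) E_{2k} = 0 for n >= 1.
   euler_seq n = [:: E_0; E_2; ...; E_{2n}]. *)
Fixpoint euler_seq (n : nat) : seq rat :=
  match n with
  | 0%N => [:: 1]
  | m.+1 => let s := euler_seq m in
            rcons s (- \sum_(k < m.+1) ('C(2 * m.+1, 2 * k))%:R * s`_k)
  end.

Definition euler2 (n : nat) : rat := (euler_seq n)`_n.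

Definition cfact (n : nat) : {poly rat} :=
  if n is 0%N then 1
  else 'X * \prod_(1 <= j < n) ('X + (n%:R / 2 - j%:R)%:P).

Definition tcf (n k : nat) : rat := (cfact n)`_k.

Definition gbinom (a : rat) (s : nat) : rat :=
  (\prod_(i < s) (a - i%:R)) / (s`!)%:R.

From HB Require Import structures.
From mathcomp Require Import all_boot all_order all_algebra.
From mathcomp Require Import ring.
Import Order.TTheory GRing.Theory Num.Theory.
Local Open Scope ring_scope.

(* On polynomials, cosh(D/2) is the averaged shift p |-> (p(x+1/2) + p(x-1/2))/2,
   and it sends x^{[n+1]}/x to x^{[n]}.  The functional q |-> (sech(D/2) q)(0)
   undoes cosh(D/2) at 0, because cosh * sech = 1 is exactly the defining
   recurrence of the Euler numbers.  Hence sech(D/2) 0^{[2s]} is the value at 0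
   of x^{[2s+1]}/x, i.e. t(2s+1,1), a product of the half-odd integers
   (2s+1)/2 - j, 1 <= j <= 2s.  The closed forms follow from
   (2s)! = 2^s s! (1.3...(2s-1)). *)

Lemma size_euler_seq n : size (euler_seq n) = n.+1.
Proof. by elim: n => [|n IHn] //=; rewrite size_rcons IHn. Qed.

Lemma nth_euler_seq m k : (k <= m)%N -> (euler_seq m)`_k = euler2 k.
Proof.
elim: m => [|m IHm]; first by rewrite leqn0 => /eqP->.
rewrite leq_eqVlt => /orP[/eqP-> //|ltkm].
by rewrite /= nth_rcons size_euler_seq ltkm IHm.
Qed.

Lemma euler2_binomial_sum m N : (m < N)%N ->
  \sum_(n < N) 'C(2 * m, 2 * n)%:R * euler2 n = (m == 0%N)%:R.
Proof.
move=> ltmN.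
have vanish n : (m < n)%N -> 'C(2 * m, 2 * n)%:R * euler2 n = 0.
  by move=> ltmn; rewrite bin_small ?ltn_pmul2l // mul0r.
transitivity (\sum_(n < m.+1) 'C(2 * m, 2 * n)%:R * euler2 n).
  rewrite (big_ord_widen N (fun n => 'C(2 * m, 2 * n)%:R * euler2 n) ltmN).
  by rewrite [RHS]big_mkcond; apply: eq_bigr => n _; case: ltnP => // /vanish.
case: m {ltmN vanish} => [|m]; first by rewrite big_ord1 bin0 mul1r.
rewrite big_ord_recr /= binn mul1r /euler2 /= nth_rcons size_euler_seq ltnn eqxx.
rewrite [X in - X](_ : _ = \sum_(k < m.+1) 'C(2 * m.+1, 2 * k)%:R * euler2 k).
  by rewrite addrN.
by apply: eq_bigr => k _; rewrite nth_euler_seq // -ltnS.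
Qed.

Lemma coef_XaddC_exp (R : comNzRingType) (c : R) i k :
  (('X + c%:P) ^+ i)`_k = 'C(i, k)%:R * c ^+ (i - k).
Proof.
elim: i k => [|i IHi] k.
  by rewrite expr0 coefC; case: k => [|k]; rewrite /= ?mul0r ?mul1r.
rewrite exprS mulrDl coefD coefXM coefCM IHi.
case: k => [|k] /=; first by rewrite IHi !bin0 !mul1r subn0 add0r exprS.
rewrite binS natrD mulrDl IHi subSS addrC; congr (_ + _).
have [ltki|leik] := ltnP k i; first by rewrite mulrCA -exprS subnSK.
by rewrite bin_small ?ltnS // !mul0r mulr0.
Qed.

Definition cosh_half (p : {poly rat}) : {poly rat} :=
  2^-1 *: ((p \Po ('X + (2^-1)%:P)) + (p \Po ('X - (2^-1)%:P))).

Lemma cosh_halfD p q : cosh_half (p + q) = cosh_half p + cosh_half q.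
Proof. by rewrite /cosh_half !comp_polyD -scalerDr addrACA. Qed.

Lemma cosh_halfZ c p : cosh_half (c *: p) = c *: cosh_half p.
Proof. by rewrite /cosh_half !comp_polyZ -scalerDr !scalerA mulrC. Qed.

Lemma cosh_half0 : cosh_half 0 = 0.
Proof. by rewrite /cosh_half !comp_poly0 addr0 scaler0. Qed.

Lemma coef_cosh_half_Xn i k : (cosh_half 'X^i)`_k =
  2^-1 * ('C(i, k)%:R * ((2^-1) ^+ (i - k) + (- 2^-1) ^+ (i - k))).
Proof.
by rewrite /cosh_half coefZ !comp_Xn_poly coefD -polyCN !coef_XaddC_exp -mulrDr.
Qed.

Lemma coef_cosh_half_Xn_odd i n : odd i -> (cosh_half 'X^i)`_(2 * n) = 0.
Proof.
move=> odd_i; rewrite coef_cosh_half_Xn.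
have [le2ni|lti2n] := leqP (2 * n) i; last by rewrite bin_small // !mul0r mulr0.
by rewrite exprNn -signr_odd oddB // odd_i oddM mulN1r addrN !mulr0.
Qed.

Lemma coef_cosh_half_X2n m n :
  (cosh_half 'X^(2 * m))`_(2 * n) = 'C(2 * m, 2 * n)%:R / 2 ^+ (2 * (m - n)).
Proof.
rewrite coef_cosh_half_Xn -mulnBr exprNn -signr_odd oddM mul1r exprVn.
by field; rewrite expf_neq0.
Qed.

(* The functional q |-> (sech(D/2) q)(0), truncated to the coefficients of
   degree < 2N; the truncation is harmless as soon as size q <= 2N. *)
Definition sech_half_at0 (N : nat) (q : {poly rat}) : rat :=
  \sum_(n < N) euler2 n / 2 ^+ (2 * n) * q`_(2 * n).

Lemma sech_half_at0_cosh_half_Xn N i : (i < 2 * N)%N ->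
  sech_half_at0 N (cosh_half 'X^i) = (i == 0%N)%:R.
Proof.
rewrite /sech_half_at0 => ltiN; have [odd_i|even_i] := boolP (odd i).
  rewrite big1; first by case: i odd_i {ltiN}.
  by move=> n _; rewrite coef_cosh_half_Xn_odd // mulr0.
have [m def_i] : exists m, i = (2 * m)%N.
  by exists i./2; rewrite -[LHS]odd_double_half (negbTE even_i) add0n mul2n.
have ltmN : (m < N)%N by rewrite -(ltn_pmul2l (isT : (0 < 2)%N)) -def_i.
rewrite def_i.
under eq_bigr => n _.
  rewrite coef_cosh_half_X2n.
  rewrite (_ : _ * _ = 'C(2 * m, 2 * n)%:R * euler2 n / 2 ^+ (2 * m)); last first.
    have [lenm|ltmn] := leqP n m; last by rewrite bin_small ?ltn_pmul2l // !mul0r mulr0.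
    rewrite [2 ^+ (2 * m)](_ : _ = 2 ^+ (2 * n) * 2 ^+ (2 * (m - n))).
      by field; rewrite !expf_neq0.
    by rewrite -exprD -mulnDr subnKC.
  over.
rewrite -mulr_suml euler2_binomial_sum // muln_eq0 /=.
by case: m {def_i ltmN} => [|m]; rewrite /= ?mul0r // expr0 divr1.
Qed.

Lemma sech_half_at0_cosh_half N (p : {poly rat}) : (size p <= 2 * N)%N ->
  sech_half_at0 N (cosh_half p) = p`_0.
Proof.
move=> le_pN.
have coef_lin k : (cosh_half p)`_k = \sum_(i < size p) p`_i * (cosh_half 'X^i)`_k.
  rewrite -[p in cosh_half p]coefK poly_def.
  rewrite (big_morph cosh_half cosh_halfD cosh_half0) coef_sum.
  by apply: eq_bigr => i _; rewrite cosh_halfZ coefZ.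
rewrite /sech_half_at0.
under eq_bigr => n _ do rewrite coef_lin mulr_sumr.
rewrite exchange_big /=.
under eq_bigr => i _.
  under eq_bigr => n _ do rewrite mulrCA.
  rewrite -mulr_sumr -/(sech_half_at0 N _) sech_half_at0_cosh_half_Xn; last first.
    exact: leq_trans (ltn_ord i) le_pN.
  over.
case: (size p) (@nth_default _ 0 p) => [->//|k _]; first by rewrite big_ord0.
by rewrite big_ord_recl mulr1 big1 ?addr0 // => i _; rewrite mulr0.
Qed.

Definition cfactX (n : nat) : {poly rat} :=
  \prod_(1 <= j < n) ('X + (n%:R / 2 - j%:R)%:P).

Lemma cfactE n : (0 < n)%N -> cfact n = 'X * cfactX n.
Proof. by case: n. Qed.

Lemma size_cfactX n : size (cfactX n.+1) = n.+1.
Proof.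
rewrite /cfactX; under eq_bigr => j _ do rewrite -[_%:P]opprK -polyCN.
by rewrite size_prod_XsubC size_iota subn1.
Qed.

Lemma comp_XaddC (R : comNzRingType) (c d : R) :
  ('X + c%:P) \Po ('X + d%:P) = 'X + (d + c)%:P.
Proof. by rewrite comp_polyD comp_polyX comp_polyC polyCD addrA. Qed.

Lemma cfactX_shift_up n : (0 < n)%N ->
  cfactX n.+1 \Po ('X + (2^-1)%:P) = ('X + (n%:R / 2)%:P) * cfactX n.
Proof.
move=> n_gt0; rewrite /cfactX rmorph_prod big_nat_recl //= comp_XaddC.
congr (_ * _); first by rewrite -natr1; congr ('X + _%:P); field.
apply: eq_bigr => j _; rewrite comp_XaddC -!natr1; congr ('X + _%:P); by field.
Qed.

Lemma cfactX_shift_down n : (0 < n)%N ->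
  cfactX n.+1 \Po ('X - (2^-1)%:P) = cfactX n * ('X - (n%:R / 2)%:P).
Proof.
move=> n_gt0; rewrite /cfactX rmorph_prod big_nat_recr //= -!polyCN comp_XaddC.
congr (_ * _); last by rewrite -natr1; congr ('X + _%:P); field.
apply: eq_bigr => j _; rewrite comp_XaddC -natr1; congr ('X + _%:P); by field.
Qed.

Lemma cosh_half_cfactX n : (0 < n)%N -> cosh_half (cfactX n.+1) = cfact n.
Proof.
move=> n_gt0; rewrite /cosh_half cfactX_shift_up // cfactX_shift_down // cfactE //.
set a := (n%:R / 2)%:P; set Q := cfactX n.
rewrite (_ : _ + _ = ('X * Q) *+ 2); last first.
  by rewrite mulrDl mulrBr [Q * 'X]mulrC mulr2n addrACA [a * Q]mulrC addrN addr0.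
by rewrite -scaler_nat scalerA mulVf ?pnatr_eq0 // scale1r.
Qed.

Definition odd_dfact (s : nat) : rat := \prod_(i < s) (2 * i + 1)%:R.

Lemma prod_half_odd s : \prod_(i < s) ((2 * i + 1)%:R / 2 : rat) = odd_dfact s / 2 ^+ s.
Proof. by rewrite big_split /= prodr_const card_ord exprVn. Qed.

Lemma prod_Nhalf_odd s :
  \prod_(i < s) (- ((2 * i + 1)%:R / 2) : rat) = (-1) ^+ s * (odd_dfact s / 2 ^+ s).
Proof.
rewrite -prod_half_odd; under eq_bigr => i _ do rewrite -mulN1r.
by rewrite big_split /= prodr_const card_ord.
Qed.

(* The constants (2s+1)/2 - j are (2(s-j)+1)/2 for j <= s and -(2(j-s-1)+1)/2 for j > s. *)
Lemma coef0_cfactX_odd s :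
  (cfactX (2 * s).+1)`_0 = (-1) ^+ s * (odd_dfact s / 2 ^+ s) ^+ 2.
Proof.
rewrite /cfactX coef0_prod.
under eq_bigr => j _ do rewrite coefD coefX add0r coefC /=.
rewrite (big_cat_nat _ (n := s.+1)) //=; last by rewrite ltnS leq_pmull.
rewrite -{2}[s.+1]add0n big_addn.
rewrite (_ : (2 * s).+1 - s.+1 = s)%N; last by rewrite subSS mul2n -addnn addnK.
rewrite big_add1 /= big_nat_rev /= !big_mkord.
rewrite expr2 (mulrA ((-1) ^+ s)) -prod_Nhalf_odd -prod_half_odd mulrC -natr1 natrM.
congr (_ * _); apply: eq_bigr => i _.
  by rewrite (natrD _ i) -(natr1 s) (natrD _ (2 * i)) (natrM _ 2); field.
by rewrite add0n subnSK // natrB 1?ltnW // (natrD _ (2 * i)) (natrM _ 2); field.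
Qed.

Lemma fact_double s : ((2 * s)`!)%:R = (s`!)%:R * 2 ^+ s * odd_dfact s :> rat.
Proof.
elim: s => [|s IHs]; first by rewrite /odd_dfact big_ord0 fact0 !mulr1.
rewrite mulnS !factS /odd_dfact big_ord_recr /= -/(odd_dfact s) !natrM IHs exprS.
by rewrite -!natr1 natrM natrD natrM; field.
Qed.

Lemma gbinom_Nhalf s :
  gbinom (- (1 / 2)) s = (-1) ^+ s * (odd_dfact s / 2 ^+ s) / (s`!)%:R.
Proof.
rewrite /gbinom -prod_Nhalf_odd; congr (_ / _); apply: eq_bigr => i _.
by rewrite natrD natrM; field.
Qed.

Theorem mainTheorem6 (s : nat) (hs : (1 <= s)%N) :
  \sum_(1 <= n < s.+1) euler2 n / 2 ^+ (2 * n) * tcf (2 * s) (2 * n)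
    = tcf (2 * s).+1 1
  /\ tcf (2 * s).+1 1 = ((2 * s)`!)%:R / 2 ^+ (2 * s) * gbinom (- (1 / 2)) s
  /\ ((2 * s)`!)%:R / 2 ^+ (2 * s) * gbinom (- (1 / 2)) s
       = (-1) ^+ s * ((\prod_(i < s) (2 * i + 1)%:R) / 2 ^+ s) ^+ 2.
Proof.
have two_s_gt0 : (0 < 2 * s)%N by rewrite muln_gt0.
have tcf_odd_1 : tcf (2 * s).+1 1 = (cfactX (2 * s).+1)`_0.
  by rewrite /tcf cfactE // coefXM.
have closed_form : ((2 * s)`!)%:R / 2 ^+ (2 * s) * gbinom (- (1 / 2)) s
    = (-1) ^+ s * (odd_dfact s / 2 ^+ s) ^+ 2.
  rewrite gbinom_Nhalf fact_double mulnC exprM; field.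
  by rewrite pnatr_eq0 -lt0n fact_gt0 expf_neq0.
split; last by rewrite tcf_odd_1 coef0_cfactX_odd closed_form.
have := sech_half_at0_cosh_half s.+1 (cfactX (2 * s).+1).
rewrite size_cfactX mulnS ltnW // tcf_odd_1 => /(_ isT) <-.
rewrite cosh_half_cfactX // /sech_half_at0 big_ord_recl /= /tcf.
rewrite muln0 cfactE // coefXM mulr0 add0r big_add1 /= big_mkord.
by apply: eq_bigr => i _; rewrite /bump leq0n add1n.
Qed.
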